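(* Let $S'$ be a HeyVL program, $X,Y$ expectations, and $S=\mathtt{assume}\ X;\ S';\ \mathtt{assert}\ Y$. Consider slices with respect to pre $\infty$ and post $\infty$. (1) If $\mathtt{assume}\ X;\ S'$ is an error-witnessing slice of $S$ w.r.t. $(\infty,\infty)$, then $\not\models\{X\}\,S'\,\{Z\}$ for every expectation $Z$. (2) If $S';\ \mathtt{assert}\ Y$ is a verification-witnessing slice of $S$ w.r.t. $(\infty,\infty)$ that verifies (i.e. $\models\{\infty\}\,S';\mathtt{assert}\ Y\,\{\infty\}$), then $\models\{Z\}\,S'\,\{Y\}$ for every expectation $Z$.
   Context: Expectations are functions from program states to $[0,\infty]$, ordered pointwise by $\preceq$. For HeyVL statements, $\mathrm{vp}$ denotes the verification pre-expectation transformer; it is monotone and satisfies $\mathrm{vp}[S_1;S_2](X)=\mathrm{vp}[S_1](\mathrm{vp}[S_2](X))$, $\mathrm{vp}[\mathtt{assert}\ Y](X)=\min(Y,X)$ pointwise, and $\mathrm{vp}[\mathtt{assume}\ Y](X)$ equals $\infty$ at $\sigma$ where $Y(\sigma)\le X(\sigma)$ and $X(\sigma)$ elsewhere. Write $\sigma\models\{X\}S\{Y\}$ iff $X(\sigma)\le\mathrm{vp}[S](Y)(\sigma)$, and $\models\{X\}S\{Y\}$ iff this holds for all states. A subprogram $P$ of $S$ is an error-witnessing slice w.r.t. $(A,B)$ if $\not\models\{A\}P\{B\}$ and every state $\sigma'$ with $\sigma'\not\models\{A\}P\{B\}$ also has $\sigma'\not\models\{A\}S\{B\}$; it is a verification-witnessing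 slice w.r.t. $(A,B)$ if $\models\{A\}P\{B\}$ implies $\models\{A\}S\{B\}$. *)

From HB Require Import structures.
From mathcomp Require Import all_boot all_order all_algebra.
From mathcomp Require Import all_classical all_reals.
From mathcomp Require Import ereal.

Set Implicit Arguments.
Unset Strict Implicit.
Unset Printing Implicit Defensive.
Import Order.TTheory GRing.Theory Num.Theory.

Local Open Scope ring_scope.
Local Open Scope ereal_scope.

Definition expectation (R : realType) (St : Type) := St -> \bar R.

Definition is_expectation (R : realType) (St : Type) (X : expectation R St) :=
  forall s, 0 <= X s.

Definition einfty (R : realType) (St : Type) : expectation R St := fun _ => +oo.
Arguments einfty : clear implicits.

Inductive heyvl (R : realType) (St : Type) : Type :=
| HSkip
| HAssign (f : St -> St)
| HRAssign (mu : seq (R * (St -> St)))            (* x :~ mu, finite distribution *)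
| HReward (t : expectation R St)
| HSeq (S1 S2 : heyvl R St)
| HIte (b : St -> bool) (S1 S2 : heyvl R St)
| HDemonic (S1 S2 : heyvl R St)
| HAngelic (S1 S2 : heyvl R St)
| HAssert (Y : expectation R St)
| HAssume (Y : expectation R St)
| HCoassert (Y : expectation R St)
| HCoassume (Y : expectation R St)
| HHavoc (V : Type) (upd : V -> St -> St)
| HCohavoc (V : Type) (upd : V -> St -> St)
| HValidate
| HCovalidate.

Arguments HSkip {R St}.
Arguments HValidate {R St}.
Arguments HCovalidate {R St}.

Fixpoint wf_heyvl (R : realType) (St : Type) (S : heyvl R St) : Prop :=
  match S with
  | HSkip | HAssign _ | HHavoc _ _ | HCohavoc _ _ | HValidate | HCovalidate => True
  | HRAssign mu => (forall pf, pf \in [seq p.1 | p <- mu] -> (0 <= pf)%R)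
                   /\ (\sum_(p <- mu) p.1 = 1)%R
  | HReward t => is_expectation t
  | HSeq S1 S2 | HIte _ S1 S2 | HDemonic S1 S2 | HAngelic S1 S2 =>
      wf_heyvl S1 /\ wf_heyvl S2
  | HAssert Y | HAssume Y | HCoassert Y | HCoassume Y => is_expectation Y
  end.

Fixpoint vp (R : realType) (St : Type) (S : heyvl R St)
  : expectation R St -> expectation R St :=
  match S with
  | HSkip => fun X => X
  | HAssign f => fun X s => X (f s)
  | HRAssign mu => fun X s => \sum_(p <- mu) ((p.1)%:E * X (p.2 s))
  | HReward t => fun X s => t s + X s
  | HSeq S1 S2 => fun X => vp S1 (vp S2 X)
  | HIte b S1 S2 => fun X s => if b s then vp S1 X s else vp S2 X s
  | HDemonic S1 S2 => fun X s => mine (vp S1 X s) (vp S2 X s)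
  | HAngelic S1 S2 => fun X s => maxe (vp S1 X s) (vp S2 X s)
  | HAssert Y => fun X s => mine (Y s) (X s)
  | HAssume Y => fun X s => if Y s <= X s then +oo else X s
  | HCoassert Y => fun X s => maxe (Y s) (X s)
  | HCoassume Y => fun X s => if X s <= Y s then 0 else X s
  | HHavoc V upd => fun X s => ereal_inf (range (fun v : V => X (upd v s)))
  | HCohavoc V upd => fun X s => ereal_sup (range (fun v : V => X (upd v s)))
  | HValidate => fun X s => if X s == +oo then +oo else 0
  | HCovalidate => fun X s => if X s == 0 then 0 else +oo
  end.

Definition valid_at (R : realType) (St : Type) (X : expectation R St)
  (S : heyvl R St) (Y : expectation R St) (s : St) : Prop :=
  X s <= vp S Y s.

Definition valid (R : realType) (St : Type) (X : expectation R St)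
  (S : heyvl R St) (Y : expectation R St) : Prop :=
  forall s, valid_at X S Y s.

Definition error_witnessing (R : realType) (St : Type) (S P : heyvl R St)
  (A B : expectation R St) : Prop :=
  ~ valid A P B /\ (forall s, ~ valid_at A P B s -> ~ valid_at A S B s).

Definition verification_witnessing (R : realType) (St : Type) (S P : heyvl R St)
  (A B : expectation R St) : Prop :=
  valid A P B -> valid A S B.

(** (1) From pre ∞, [assume X; S'] verifies w.r.t. post B at σ iff
    [X σ <= vp[S'](B) σ]; so the error-witnessing slice exhibits a state with
    [vp[S'](∞) σ < X σ], and monotonicity of [vp] then refutes [{X} S' {Z}] for
    every nonnegative [Z]. (2) [vp[assert Y](∞) = Y], so the verifying slice
    already forces [vp[S'](Y) = ∞] everywhere, which dominates any [Z]. *)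

From mathcomp Require Import all_boot all_order all_algebra.
From mathcomp Require Import all_classical all_reals ereal.
Set Implicit Arguments.
Unset Strict Implicit.
Unset Printing Implicit Defensive.
Import Order.TTheory GRing.Theory Num.Theory.
Local Open Scope ring_scope.
Local Open Scope ereal_scope.

Section MonotoneVp.
Variable R : realType.
Implicit Types (a b y : \bar R).

(* [vp] is monotone on nonnegative expectations, but the induction leaves that
   domain: [cohavoc] over an empty type yields [-oo]. As [covalidate] sends
   [-oo] to [+oo] and [0] to [0], the invariant keeps [-oo] related only to
   itself. *)
Definition lee_nng a b := (a = -oo /\ b = -oo) \/ (0 <= a /\ a <= b).

Lemma lee_nng_refl a : 0 <= a -> lee_nng a a.
Proof. by move=> a0; right. Qed.

Lemma lee_nngW a b : lee_nng a b -> a <= b.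
Proof. by case=> [[-> ->]|[]]. Qed.

Lemma lee_nngD a1 a2 b1 b2 :
  lee_nng a1 a2 -> lee_nng b1 b2 -> lee_nng (a1 + b1) (a2 + b2).
Proof.
case=> [[-> ->]|[a0 a12]]; first by rewrite !addNye; left.
case=> [[-> ->]|[b0 b12]]; first by rewrite !addeNy; left.
by right; split; [exact: adde_ge0 | exact: leeD].
Qed.

Lemma lee_nngZ (r : R) a1 a2 :
  (0 <= r)%R -> lee_nng a1 a2 -> lee_nng (r%:E * a1) (r%:E * a2).
Proof.
move=> r0 [[-> ->]|[a0 a12]].
  have [->|r_neq0] := eqVneq r 0%R; first by rewrite mul0e; exact: lee_nng_refl.
  by rewrite mulrNy gtr0_sg ?mul1e; [left | rewrite lt_def r_neq0].
by right; split; [exact: mule_ge0 | exact: lee_wpmul2l].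
Qed.

Lemma lee_nng_wsum (T : Type) (mu : seq (R * T)) (F G : T -> \bar R) :
  (forall w, w \in [seq p.1 | p <- mu] -> (0 <= w)%R) ->
  (forall t, lee_nng (F t) (G t)) ->
  lee_nng (\sum_(p <- mu) p.1%:E * F p.2) (\sum_(p <- mu) p.1%:E * G p.2).
Proof.
move=> mu_ge0 FG; elim: mu mu_ge0 => [|p mu IHmu] mu_ge0.
  by rewrite !big_nil; exact: lee_nng_refl.
rewrite !big_cons; apply: lee_nngD.
  by apply: lee_nngZ => //; apply: mu_ge0; rewrite inE eqxx.
by apply: IHmu => w w_mu; apply: mu_ge0; rewrite inE w_mu orbT.
Qed.

Lemma lee_nng_min a1 a2 b1 b2 :
  lee_nng a1 a2 -> lee_nng b1 b2 -> lee_nng (mine a1 b1) (mine a2 b2).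
Proof.
case=> [[-> ->]|[a0 a12]]; first by rewrite !minNye; left.
case=> [[-> ->]|[b0 b12]]; first by rewrite !mineNy; left.
by right; rewrite !le_min a0 b0 !ge_min a12 b12 !orbT.
Qed.

Lemma lee_nng_max a1 a2 b1 b2 :
  lee_nng a1 a2 -> lee_nng b1 b2 -> lee_nng (maxe a1 b1) (maxe a2 b2).
Proof.
have le_max12 (c1 c2 d1 d2 : \bar R) : c1 <= c2 -> d1 <= d2 -> maxe c1 d1 <= maxe c2 d2.
  by move=> c12 d12; rewrite ge_max !le_max c12 d12 orbT.
case=> [[-> ->]|[a0 a12]].
  case=> [[-> ->]|[b0 b12]]; first by rewrite !maxNye; left.
  by right; rewrite le_max b0 orbT le_max12.
by case=> [[-> ->]|[b0 b12]]; right; rewrite le_max a0 le_max12.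
Qed.

Lemma lee_nng_inf (V : Type) (f g : V -> \bar R) :
  (forall v, lee_nng (f v) (g v)) ->
  lee_nng (ereal_inf (range f)) (ereal_inf (range g)).
Proof.
move=> fg.
have [[v fv]|f_ninfty] := pselect (exists v, f v = -oo).
  have gv : g v = -oo by case: (fg v) => [[]|[]] //; rewrite fv.
  by left; split; apply/eqP; rewrite -leeNy_eq;
    [rewrite -fv | rewrite -gv]; apply: ereal_inf_lbound; exists v.
have f_ge0 v : 0 <= f v /\ f v <= g v.
  by case: (fg v) => [[fv _]|//]; exfalso; apply: f_ninfty; exists v.
right; split; apply: le_ereal_inf_tmp => _ [v _ <-]; first exact: (f_ge0 v).1.
by apply: le_trans (f_ge0 v).2; apply: ereal_inf_lbound; exists v.
Qed.

Lemma lee_nng_sup (V : Type) (f g : V -> \bar R) :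
  (forall v, lee_nng (f v) (g v)) ->
  lee_nng (ereal_sup (range f)) (ereal_sup (range g)).
Proof.
move=> fg.
have [[v fv0]|f_lt0] := pselect (exists v, 0 <= f v).
  right; split; first by apply: le_trans fv0 _; apply: ereal_sup_ubound; exists v.
  apply: ge_ereal_sup => _ [w _ <-].
  have fgw : f w <= g w by case: (fg w) => [[-> ->]|[]].
  by apply: le_trans fgw (ereal_sup_ubound _); exists w.
have fg_ninfty w : f w = -oo /\ g w = -oo.
  by case: (fg w) => [//|[fw0 _]]; exfalso; apply: f_lt0; exists w.
by left; split; apply/eqP; rewrite -leeNy_eq; apply: ge_ereal_sup => _ [w _ <-];
  case: (fg_ninfty w) => fw gw; rewrite ?fw ?gw.
Qed.

Lemma lee_nng_assume y a1 a2 : 0 <= y -> lee_nng a1 a2 ->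
  lee_nng (if y <= a1 then +oo else a1) (if y <= a2 then +oo else a2).
Proof.
move=> y0 a12.
have y_not_leNy : ~~ (y <= -oo) by rewrite leeNy_eq gt_eqF // (lt_le_trans _ y0).
case: ifPn => [ya1|]; case: ifPn => [ya2|] //.
- by apply: lee_nng_refl; rewrite leey.
- case: a12 => [[a1_ninfty _]|[_ a12]]; last by rewrite (le_trans ya1 a12).
  by rewrite -a1_ninfty ya1 in y_not_leNy.
- case: a12 => [[_ a2_ninfty]|[a0 _] _]; last by right; rewrite leey.
  by rewrite -a2_ninfty ya2 in y_not_leNy.
Qed.

Lemma lee_nng_coassume y a1 a2 : 0 <= y -> lee_nng a1 a2 ->
  lee_nng (if a1 <= y then 0 else a1) (if a2 <= y then 0 else a2).
Proof.
move=> y0 a12; case: ifPn => [a1y|]; case: ifPn => [a2y|] //.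
- exact: lee_nng_refl.
- by rewrite -ltNge => ya2; right; rewrite (le_trans y0 (ltW ya2)).
- by case: a12 => [[-> _]|[_ a12]]; [rewrite leNye | rewrite (le_trans a12 a2y)].
Qed.

Lemma lee_nng_validate a1 a2 : lee_nng a1 a2 ->
  lee_nng (if a1 == +oo then +oo else 0) (if a2 == +oo then +oo else 0).
Proof.
case=> [[-> ->]|[_ a12]]; first exact: lee_nng_refl.
have [a1_infty|_] := eqVneq a1 +oo.
  by move: a12; rewrite a1_infty leye_eq => /eqP ->; rewrite eqxx; exact: lee_nng_refl.
by right; split => //; case: ifP; rewrite ?leey.
Qed.

Lemma lee_nng_covalidate a1 a2 : lee_nng a1 a2 ->
  lee_nng (if a1 == 0 then 0 else +oo) (if a2 == 0 then 0 else +oo).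
Proof.
case=> [[-> ->]|[a0 a12]]; first exact: lee_nng_refl.
have [_|a1_neq0] := eqVneq a1 0; first by right; split => //; case: ifP; rewrite ?leey.
have [a2_0|_] := eqVneq a2 0; last exact: lee_nng_refl.
by move: a1_neq0; rewrite eq_le a0 -a2_0 a12.
Qed.

Lemma vp_lee_nng (St : Type) (S : heyvl R St) (A1 A2 : expectation R St) :
  wf_heyvl S -> (forall s, lee_nng (A1 s) (A2 s)) ->
  forall s, lee_nng (vp S A1 s) (vp S A2 s).
Proof.
elim: S A1 A2 => /= [||mu|t|S1 IH1 S2 IH2|b S1 IH1 S2 IH2|S1 IH1 S2 IH2
  |S1 IH1 S2 IH2|Y|Y|Y|Y|V upd|V upd||] A1 A2 wfS A12 s //.
- case: wfS => mu_ge0 _.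
  exact: (lee_nng_wsum (F := fun g => A1 (g s)) (G := fun g => A2 (g s))).
- by apply: lee_nngD => //; exact: lee_nng_refl.
- by case: wfS => wf1 wf2; apply: IH1 => //; exact: IH2.
- by case: wfS => wf1 wf2; case: (b s); [exact: IH1 | exact: IH2].
- by case: wfS => wf1 wf2; apply: lee_nng_min; [exact: IH1 | exact: IH2].
- by case: wfS => wf1 wf2; apply: lee_nng_max; [exact: IH1 | exact: IH2].
- by apply: lee_nng_min => //; exact: lee_nng_refl.
- exact: lee_nng_assume.
- by apply: lee_nng_max => //; exact: lee_nng_refl.
- exact: lee_nng_coassume.
- exact: lee_nng_inf.
- exact: lee_nng_sup.
- exact: lee_nng_validate.
- exact: lee_nng_covalidate.
Qed.

Lemma le_vp (St : Type) (S : heyvl R St) (A1 A2 : expectation R St) :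
  wf_heyvl S -> is_expectation A1 -> (forall s, A1 s <= A2 s) ->
  forall s, vp S A1 s <= vp S A2 s.
Proof.
move=> wfS A1_ge0 A12 s.
have A12_nng t : lee_nng (A1 t) (A2 t) by right.
exact/lee_nngW/(vp_lee_nng wfS A12_nng).
Qed.

End MonotoneVp.

Section EinftyPre.
Variables (R : realType) (St : Type).
Implicit Types (A B X Y : expectation R St) (S : heyvl R St).

Lemma valid_at_einfty_assume X S B (s : St) :
  valid_at (einfty R St) (HSeq (HAssume X) S) B s <-> X s <= vp S B s.
Proof.
rewrite /valid_at /einfty /=; split; case: ifPn => // XB.
  by rewrite leye_eq => /eqP SB; rewrite SB leey in XB.
Qed.

Lemma vp_assert_einfty Y :
  vp (HAssert Y) (einfty R St) = Y.
Proof. by apply/funext => s; rewrite /= /einfty; apply/min_idPl; exact: leey. Qed.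

Lemma valid_einfty_pre A S B :
  valid (einfty R St) S B -> valid A S B.
Proof. by move=> SB s; apply: le_trans (SB s); exact: leey. Qed.

End EinftyPre.

Theorem theorem4 (R : realType) (St : Type) (S' : heyvl R St)
  (X Y : expectation R St) :
  wf_heyvl S' -> is_expectation X -> is_expectation Y ->
  let S := HSeq (HAssume X) (HSeq S' (HAssert Y)) in
  (error_witnessing S (HSeq (HAssume X) S') (einfty R St) (einfty R St) ->
     forall Z : expectation R St, is_expectation Z -> ~ valid X S' Z)
  /\
  (verification_witnessing S (HSeq S' (HAssert Y)) (einfty R St) (einfty R St) ->
     valid (einfty R St) (HSeq S' (HAssert Y)) (einfty R St) ->
     forall Z : expectation R St, is_expectation Z -> valid Z S' Y).
Proof.
move=> wfS' _ _ S; split.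
- move=> [slice_fails _] Z Z_ge0 XZ; apply: slice_fails => s.
  apply/valid_at_einfty_assume; apply: le_trans (XZ s) _.
  by apply: le_vp => // t; exact: leey.
- move=> _ slice_valid Z _; apply: valid_einfty_pre.
  by rewrite -(vp_assert_einfty Y).
Qed.
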